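(* Let $\mathbb{A}_f$ be the ring of finite adeles of $\mathbf{Q}$, $\widehat{\mathbf{Z}}=\prod_p\mathbf{Z}_p$, and regard $\mathbb{A}_f$ as a commutative monoid under multiplication. The multiplication descends to the double quotient $\mathbf{Q}^\times\backslash\mathbb{A}_f/\widehat{\mathbf{Z}}^\times$. Let $\operatorname{Pic}(\operatorname{Spec}\mathbf{Z})$ be the set of arithmetic divisors $\sum_p n_p[p]$ (with $n_p\in\mathbf{Z}\cup\{+\infty\}$, $n_p<0$ for finitely many $p$) modulo linear equivalence ($D\sim D'$ iff $D=D'-\sum_p v_p(q)[p]$ for some $q\in\mathbf{Q}^\times$), with the monoid structure induced by coefficientwise addition (convention $\infty+k=\infty$). Then the map \[ \Phi:\mathbf{Q}^\times\backslash\mathbb{A}_f/\widehat{\mathbf{Z}}^\times\longrightarrow \operatorname{Pic}(\operatorname{Spec}\mathbf{Z}),\qquad [(a_p)_p]\longmapsto \Big[\sum_p v_p(a_p)[p]\Big] \] (with $v_p(0)=\infty$) is an isomorphism of commutative monoids: it is bijective and sends multiplication of finite adeles to addition of divisors. *)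

From mathcomp Require Import all_boot all_order all_algebra.
From Stdlib Require Import ClassicalEpsilon.
Set Implicit Arguments. Unset Strict Implicit. Unset Printing Implicit Defensive.
Import Order.TTheory GRing.Theory Num.Theory.

(* A p-adic integer is a compatible family x n \in Z/p^n Z (represented
   by its residue in [0, p^n)). *)
Definition zp_raw := nat -> nat.

Definition is_zp (p : nat) (x : zp_raw) : Prop :=
  (forall n, x n < p ^ n) /\ (forall n, x n.+1 %% p ^ n = x n).

Definition zp_eq (x y : zp_raw) : Prop := forall n, x n = y n.

Definition zp_mul (p : nat) (x y : zp_raw) : zp_raw :=
  fun n => (x n * y n) %% p ^ n.

Definition zp_of_int (p : nat) (m : int) : zp_raw :=
  fun n => `|(m %% (p ^ n)%:Z)%Z|%N.

Definition zp_one (p : nat) : zp_raw := zp_of_int p 1.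

Inductive zinf := Fin of int | Inf.

Definition zinf_add (a b : zinf) : zinf :=
  match a, b with Fin x, Fin y => Fin (x + y)%R | _, _ => Inf end.

(* p-adic valuation on Z_p: sup {n | p^n divides x} = sup {n | x n = 0},
   i.e. the least n with x (n+1) <> 0, and +oo for x = 0. *)
Definition vzp (x : zp_raw) : zinf :=
  match excluded_middle_informative (exists n, x n.+1 != 0) with
  | left H => Fin (ex_minn H)%:Z
  | right _ => Inf
  end.

(* (x, k) represents p^(-k) * x, with x in Z_p. *)
Definition qp_raw := (zp_raw * nat)%type.

Definition is_qp (p : nat) (a : qp_raw) : Prop := is_zp p a.1.

Definition qp_eq (p : nat) (a b : qp_raw) : Prop :=
  zp_eq (zp_mul p a.1 (zp_of_int p (p ^ b.2)%:Z))
        (zp_mul p b.1 (zp_of_int p (p ^ a.2)%:Z)).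

Definition qp_mul (p : nat) (a b : qp_raw) : qp_raw :=
  (zp_mul p a.1 b.1, a.2 + b.2).

Definition qp_of_zp (x : zp_raw) : qp_raw := (x, 0).

Definition qp_in_zp (p : nat) (a : qp_raw) : Prop :=
  exists y, is_zp p y /\ qp_eq p (qp_of_zp y) a.

Definition vqp (a : qp_raw) : zinf :=
  zinf_add (vzp a.1) (Fin (- (a.2)%:Z)%R).

(* a p is the p-component (only primes p matter). *)
Definition adele_raw := nat -> qp_raw.

Definition is_adele (a : adele_raw) : Prop :=
  (forall p, prime p -> is_qp p (a p)) /\
  (exists N, forall p, prime p -> N <= p -> qp_in_zp p (a p)).

Definition adele_mul (a b : adele_raw) : adele_raw :=
  fun p => qp_mul p (a p) (b p).

Definition adele_one : adele_raw := fun p => qp_of_zp (zp_one p).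

Definition adele_of_int (m : int) : adele_raw :=
  fun p => qp_of_zp (zp_of_int p m).

Definition adele_eq (a b : adele_raw) : Prop :=
  forall p, prime p -> qp_eq p (a p) (b p).

Definition zhat_unit (u : nat -> zp_raw) : Prop :=
  (forall p, prime p -> is_zp p (u p)) /\
  exists w : nat -> zp_raw,
    (forall p, prime p -> is_zp p (w p)) /\
    (forall p, prime p -> zp_eq (zp_mul p (u p) (w p)) (zp_one p)).

(* a and b define the same class in Q^x \ A_f / Zhat^x:
   b = q * a * u with q = m/n in Q^x and u in Zhat^x,
   written (to avoid dividing) as n * b = m * a * u. *)
Definition adele_rel (a b : adele_raw) : Prop :=
  exists (m n : int) (u : nat -> zp_raw),
    m != 0%R /\ n != 0%R /\ zhat_unit u /\
    adele_eq (adele_mul (adele_of_int n) b)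
             (adele_mul (adele_mul (adele_of_int m) a)
                        (fun p => qp_of_zp (u p))).

(* D p is the coefficient n_p of [p] (only primes p matter). *)
Definition divisor := nat -> zinf.

Definition zinf_neg (a : zinf) : bool :=
  if a is Fin x then (x < 0)%R else false.

Definition is_divisor (D : divisor) : Prop :=
  exists N, forall p, prime p -> N <= p -> ~~ zinf_neg (D p).

Definition vrat (p : nat) (q : rat) : int :=
  ((logn p `|numq q|%N)%:Z - (logn p `|denq q|%N)%:Z)%R.

Definition lin_equiv (D D' : divisor) : Prop :=
  exists q : rat, q != 0%R /\
    forall p, prime p -> D p = zinf_add (D' p) (Fin (- vrat p q)%R).

Definition divisor_eq (D D' : divisor) : Prop :=
  forall p, prime p -> D p = D' p.

Definition divisor_add (D D' : divisor) : divisor :=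
  fun p => zinf_add (D p) (D' p).

Definition divisor_zero : divisor := fun _ => Fin 0.

Definition Phi (a : adele_raw) : divisor := fun p => vqp (a p).

From mathcomp Require Import all_boot all_order all_algebra.
From mathcomp Require Import zify cyclic.
From Stdlib Require Import FunctionalExtensionality ClassicalEpsilon.
Set Implicit Arguments. Unset Strict Implicit. Unset Printing Implicit Defensive.
Import Order.TTheory GRing.Theory Num.Theory.

(* Everything happens one prime at a time.  On Q_p = Z_p[1/p] the valuation
   v_p is multiplicative, and two p-adic numbers of the same valuation differ
   by a unit of Z_p: an element of Z_p of valuation V is p^V times an element
   with nonzero residue mod p, and such an element is invertible, its inverse
   mod p^n being given by Euler's theorem.  So v_p identifies Q_p / Z_p^x with
   Z u {oo}, and over all primes A_f / Zhat^x becomes the monoid of divisors,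
   integrality almost everywhere matching effectivity almost everywhere.
   Multiplying by q in Q^x shifts divisors by div(q), so Q^x-orbits of adeles
   match linear equivalence classes; for injectivity the local units are
   chosen prime by prime. *)

Lemma modz_dvdm (m n d : int) : (d %| m)%Z -> modz (modz n m) d = modz n d.
Proof. by move=> /dvdzP [c ->]; rewrite [in RHS](divz_eq n (c * d)%R) mulrA modzMDl. Qed.

Lemma modn_inv_uniq d a r r' :
  a * r = 1 %[mod d] -> a * r' = 1 %[mod d] -> r = r' %[mod d].
Proof.
move=> ar ar'.
by rewrite -[r]muln1 -modnMmr -ar' modnMmr mulnA -modnMml (mulnC r) ar modnMml mul1n.
Qed.

Lemma zinf_add0 x : zinf_add x (Fin 0) = x.
Proof. by case: x => //= i; rewrite addr0. Qed.

Lemma zinf_shiftE x y (k l : int) :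
  x = zinf_add y (Fin (- (k - l))) <-> zinf_add (Fin l) y = zinf_add (Fin k) x.
Proof. by case: x y => [i|] [j|] //=; split=> // -[] ij; congr Fin; lia. Qed.

Section Padic.

Variable p : nat.
Hypothesis p_prime : prime p.

Lemma expp_gt0 n : 0 < p ^ n.
Proof. by rewrite expn_gt0 prime_gt0. Qed.

Lemma zp_of_intE m n : Posz (zp_of_int p m n) = modz m (p ^ n)%N.
Proof. by rewrite /zp_of_int gez0_abs // modz_ge0 // eqz_nat -lt0n expp_gt0. Qed.

Lemma zp_of_natE (k : nat) n : zp_of_int p k n = k %% p ^ n.
Proof. by apply/eqP; rewrite -eqz_nat zp_of_intE modz_nat. Qed.

Lemma zp_oneE n : zp_one p n = 1 %% p ^ n.
Proof. exact: zp_of_natE. Qed.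

Lemma is_zp_of_int m : is_zp p (zp_of_int p m).
Proof.
split=> n; first by rewrite -ltz_nat zp_of_intE ltz_pmod // ltz_nat expp_gt0.
apply/eqP; rewrite -eqz_nat -modz_nat !zp_of_intE modz_dvdm //.
exact: dvdn_exp2l (leqnSn n).
Qed.

Lemma is_zp_one : is_zp p (zp_one p).
Proof. exact: is_zp_of_int. Qed.

Lemma zp_modn x n N : is_zp p x -> n <= N -> x N %% p ^ n = x n.
Proof.
move=> [xlt xS]; elim: N => [|N IHN]; first by rewrite leqn0 => /eqP ->; rewrite modn_small.
rewrite leq_eqVlt => /predU1P [-> | ]; first by rewrite modn_small.
rewrite ltnS => le; rewrite -(IHN le) -(xS N) modn_dvdm //.
exact: dvdn_exp2l.
Qed.

Lemma zp_eq0_dvd x n N : is_zp p x -> n <= N -> (x n == 0) = (p ^ n %| x N).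
Proof. by move=> hx le; rewrite -(zp_modn hx le). Qed.

Lemma zp_eq0_le x m n : is_zp p x -> m <= n -> x n = 0 -> x m = 0.
Proof. by move=> hx le xn; rewrite -(zp_modn hx le) xn mod0n. Qed.

Lemma is_zp_mul x y : is_zp p x -> is_zp p y -> is_zp p (zp_mul p x y).
Proof.
move=> hx hy; split=> n; first by rewrite ltn_pmod ?expp_gt0.
rewrite /zp_mul modn_dvdm ?dvdn_exp2l // -modnMm.
by rewrite (zp_modn hx (leqnSn n)) (zp_modn hy (leqnSn n)).
Qed.

Lemma zp_mulC x y : zp_mul p x y = zp_mul p y x.
Proof. by apply: functional_extensionality => n; rewrite /zp_mul mulnC. Qed.

Lemma zp_mulA x y z : zp_mul p x (zp_mul p y z) = zp_mul p (zp_mul p x y) z.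
Proof.
by apply: functional_extensionality => n; rewrite /zp_mul modnMmr modnMml mulnA.
Qed.

Lemma zp_mulCA x y z : zp_mul p x (zp_mul p y z) = zp_mul p y (zp_mul p x z).
Proof. by rewrite zp_mulA (zp_mulC x y) -zp_mulA. Qed.

Lemma zp_mulACA x y z t :
  zp_mul p (zp_mul p x y) (zp_mul p z t) = zp_mul p (zp_mul p x z) (zp_mul p y t).
Proof. by rewrite -!zp_mulA (zp_mulCA y z). Qed.

Lemma zp_mul1 x : is_zp p x -> zp_mul p x (zp_one p) = x.
Proof.
move=> [xlt _]; apply: functional_extensionality => n.
by rewrite /zp_mul zp_oneE modnMmr muln1 modn_small.
Qed.

Lemma zp_of_intM m m' :
  zp_of_int p (m * m') = zp_mul p (zp_of_int p m) (zp_of_int p m').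
Proof.
apply: functional_extensionality => n; apply/eqP.
by rewrite /zp_mul -eqz_nat -modz_nat PoszM !zp_of_intE modzMm.
Qed.

Definition zp_expp k := zp_of_int p (p ^ k)%N.

Lemma zp_exppD k l : zp_expp (k + l) = zp_mul p (zp_expp k) (zp_expp l).
Proof. by rewrite /zp_expp expnD PoszM zp_of_intM. Qed.

Lemma is_zp_expp k : is_zp p (zp_expp k).
Proof. exact: is_zp_of_int. Qed.

#[local] Hint Resolve is_zp_of_int is_zp_one is_zp_mul is_zp_expp : core.

Variant vzp_spec (x : zp_raw) : zinf -> Prop :=
  | VzpInf of (forall n, x n = 0) : vzp_spec x Inf
  | VzpFin (k : nat) of x k = 0 & x k.+1 != 0 : vzp_spec x (Fin k).

Lemma zp_at0 x : is_zp p x -> x 0 = 0.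
Proof. by case=> /(_ 0); rewrite expn0; case: (x 0). Qed.

Lemma vzpP x : is_zp p x -> vzp_spec x (vzp x).
Proof.
move=> hx; rewrite /vzp; case: excluded_middle_informative => [ex | none].
  case: ex_minnP => k xk1 kmin; constructor => //.
  case: k xk1 kmin => [|k] _ kmin; first exact: zp_at0.
  by apply/eqP; apply: contraFT (ltnn k); apply: kmin.
constructor=> -[|n]; first exact: zp_at0.
by apply/eqP; apply: contra_notT none => nz; exists n.
Qed.

Lemma vzp_inf x : (forall n, x n = 0) -> vzp x = Inf.
Proof.
move=> x0; rewrite /vzp; case: excluded_middle_informative => // ex.
by exfalso; case: ex => n; rewrite x0.
Qed.

Lemma vzp_fin x k : is_zp p x -> x k = 0 -> x k.+1 != 0 -> vzp x = Fin k.
Proof.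
move=> hx xk xk1; case: (vzpP hx) => [x0 | j xj xj1]; first by rewrite x0 in xk1.
congr (Fin (Posz _)); apply/eqP; rewrite eqn_leq; apply/andP; split; rewrite leqNgt.
  by apply: contra xk1 => lt; rewrite (zp_eq0_le hx lt xj).
by apply: contra xj1 => lt; rewrite (zp_eq0_le hx lt xk).
Qed.

Lemma vzp_finE x (k : nat) : is_zp p x -> vzp x = Fin k -> x k = 0 /\ x k.+1 != 0.
Proof. by move=> hx; case: (vzpP hx) => // j xj xj1 [<-]. Qed.

Lemma zp_logn x k N : is_zp p x -> x k = 0 -> x k.+1 != 0 -> k < N ->
  0 < x N /\ logn p (x N) = k.
Proof.
move=> hx xk xk1 kN.
have xN : 0 < x N.
  by rewrite lt0n; apply: contra xk1 => /eqP xN0; rewrite (zp_eq0_dvd hx kN) xN0 dvdn0.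
split=> //; apply/eqP; rewrite eqn_leq; apply/andP; split.
  by rewrite -ltnS ltnNge -(pfactor_dvdn _ p_prime xN) -(zp_eq0_dvd hx kN) xk1.
by rewrite -(pfactor_dvdn _ p_prime xN) -(zp_eq0_dvd hx (ltnW kN)) xk.
Qed.

Lemma vzp_mul x y : is_zp p x -> is_zp p y ->
  vzp (zp_mul p x y) = zinf_add (vzp x) (vzp y).
Proof.
move=> hx hy; case: (vzpP hx) => [x0 | i xi xi1].
  by apply: vzp_inf => n; rewrite /zp_mul x0 mod0n.
case: (vzpP hy) => [y0 | j yj yj1].
  by apply: vzp_inf => n; rewrite /zp_mul y0 muln0 mod0n.
set N := (i + j).+1.
have [xN lx] : 0 < x N /\ logn p (x N) = i.
  by apply: (zp_logn hx xi xi1); rewrite ltnS leq_addr.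
have [yN ly] : 0 < y N /\ logn p (y N) = j.
  by apply: (zp_logn hy yj yj1); rewrite ltnS leq_addl.
have lxy : logn p (x N * y N) = i + j by rewrite lognM // lx ly.
have xyN : 0 < x N * y N by rewrite muln_gt0 xN.
rewrite /= -PoszD; apply: (vzp_fin (is_zp_mul hx hy)); rewrite /zp_mul.
- apply/eqP; rewrite (zp_eq0_dvd (is_zp_mul hx hy) (leqnSn _)) /zp_mul -/N.
  by rewrite /dvdn modn_dvdm ?dvdn_exp2l // -/(dvdn _ _) pfactor_dvdn // lxy.
- by rewrite -/N -/(dvdn _ _) pfactor_dvdn // lxy ltnn.
Qed.

Lemma zp_of_int_eq0 m n : (zp_of_int p m n == 0) = (p ^ n %| `|m|%N).
Proof.
rewrite -eqz_nat zp_of_intE; apply/eqP/idP => [/dvdz_mod0P // | dvd].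
exact/dvdz_mod0P.
Qed.

Lemma vzp_of_int (m : int) : m != 0%R -> vzp (zp_of_int p m) = Fin (logn p `|m|%N).
Proof.
move=> m0; have m0' : 0 < `|m|%N by rewrite absz_gt0.
apply: vzp_fin => //; first by apply/eqP; rewrite zp_of_int_eq0 pfactor_dvdnn.
by rewrite zp_of_int_eq0 pfactor_dvdn // ltnn.
Qed.

Lemma vzp_expp k : vzp (zp_expp k) = Fin k.
Proof.
by rewrite /zp_expp vzp_of_int ?pfactorK // -lt0n expp_gt0.
Qed.

Lemma vzp_one : vzp (zp_one p) = Fin 0.
Proof. exact: (vzp_expp 0). Qed.

Definition zp_inverses (u w : zp_raw) : Prop :=
  [/\ is_zp p u, is_zp p w & zp_mul p u w = zp_one p].

Lemma vzp_unit u w : zp_inverses u w -> vzp u = Fin 0.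
Proof.
case=> hu hw uw; have := vzp_mul hu hw; rewrite uw vzp_one.
by case: (vzpP hu) => [_|i _ _]; case: (vzpP hw) => [_|j _ _] //= [] ij; congr Fin; lia.
Qed.

Definition zp_shift V (x : zp_raw) : zp_raw := fun n => x (n + V) %/ p ^ V.

Section Shift.

Variables (V : nat) (x : zp_raw).
Hypotheses (hx : is_zp p x) (xV : x V = 0).

Lemma zp_shift_dvd n : p ^ V %| x (n + V).
Proof. by rewrite -(zp_eq0_dvd hx (leq_addl n V)) xV. Qed.

Lemma is_zp_shift : is_zp p (zp_shift V x).
Proof.
split=> n; rewrite /zp_shift.
  by rewrite ltn_divLR ?expp_gt0 // -expnD; case: hx.
rewrite -(zp_modn hx (leqnSn (n + V))) -addSn expnD.
by rewrite -[in RHS](divnK (zp_shift_dvd n.+1)) -muln_modl mulnK ?expp_gt0.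
Qed.

Lemma zp_shiftK : zp_mul p (zp_expp V) (zp_shift V x) = x.
Proof.
apply: functional_extensionality => n.
rewrite /zp_mul /zp_expp zp_of_natE modnMml /zp_shift mulnC divnK ?zp_shift_dvd //.
by rewrite (zp_modn hx (leq_addr V n)).
Qed.

Lemma zp_shift_unit : x V.+1 != 0 -> zp_shift V x 1 != 0.
Proof.
apply: contra => /eqP x1; rewrite -add1n.
by rewrite -(divnK (zp_shift_dvd 1)) /zp_shift in x1 *; rewrite x1.
Qed.

End Shift.

(* Euler's theorem inverts a residue prime to p modulo every p ^ n. *)
Definition zp_inv (y : zp_raw) : zp_raw :=
  fun n => y n ^ (totient (p ^ n)).-1 %% p ^ n.

Lemma zp_mulV y : is_zp p y -> y 1 != 0 -> zp_mul p y (zp_inv y) = zp_one p.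
Proof.
move=> hy y1; apply: functional_extensionality => n.
rewrite /zp_mul /zp_inv zp_oneE modnMmr -expnS prednK ?totient_gt0 ?expp_gt0 //.
case: n => [|n]; first by rewrite !expn0 !modn1.
apply: Euler_exp_totient; rewrite coprime_pexpr // coprime_sym prime_coprime //.
by rewrite -[p in p %| _]expn1 -(zp_eq0_dvd hy).
Qed.

Lemma is_zp_inv y : is_zp p y -> y 1 != 0 -> is_zp p (zp_inv y).
Proof.
move=> hy y1; split=> n; first by rewrite ltn_pmod ?expp_gt0.
have yV m : y m * zp_inv y m = 1 %[mod p ^ m].
  by have := congr1 (fun z => z m) (zp_mulV hy y1); rewrite /zp_mul zp_oneE.
have -> : zp_inv y n = zp_inv y n %% p ^ n by rewrite /zp_inv modn_mod.
apply: (modn_inv_uniq (a := y n)) (yV n).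
rewrite -(zp_modn hy (leqnSn n)) modnMml.
by rewrite -(modn_dvdm _ (dvdn_exp2l p (leqnSn n))) yV modn_dvdm ?dvdn_exp2l.
Qed.

Lemma zp_unit_of_eq_vzp A B (V : nat) : is_zp p A -> is_zp p B ->
  vzp A = Fin V -> vzp B = Fin V -> exists u w, zp_inverses u w /\ zp_mul p B u = A.
Proof.
move=> hA hB /(vzp_finE hA) [A0 A1] /(vzp_finE hB) [B0 B1].
set A' := zp_shift V A; set B' := zp_shift V B.
have hA' : is_zp p A' by apply: is_zp_shift.
have hB' : is_zp p B' by apply: is_zp_shift.
have uA : A' 1 != 0 by apply: zp_shift_unit.
have uB : B' 1 != 0 by apply: zp_shift_unit.
exists (zp_mul p A' (zp_inv B')), (zp_mul p B' (zp_inv A')); split; first split.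
- by apply: is_zp_mul => //; apply: is_zp_inv.
- by apply: is_zp_mul => //; apply: is_zp_inv.
- by rewrite (zp_mulC A') zp_mulACA (zp_mulC (zp_inv B')) !zp_mulV // zp_mul1.
rewrite -[in RHS](zp_shiftK hA A0) -[in LHS](zp_shiftK hB B0) -/A' -/B'.
by rewrite -zp_mulA (zp_mulCA B') zp_mulV // zp_mul1.
Qed.

Lemma qp_eqE a b :
  qp_eq p a b <-> zp_mul p a.1 (zp_expp b.2) = zp_mul p b.1 (zp_expp a.2).
Proof.
split=> [ab | e n]; first exact: functional_extensionality.
exact: (congr1 (fun z => z n) e).
Qed.

Lemma is_qp_mul a b : is_qp p a -> is_qp p b -> is_qp p (qp_mul p a b).
Proof. exact: is_zp_mul. Qed.

Lemma qp_eq_mul a b c d :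
  qp_eq p a b -> qp_eq p c d -> qp_eq p (qp_mul p a c) (qp_mul p b d).
Proof.
move=> /qp_eqE ab /qp_eqE cd; apply/qp_eqE => /=.
by rewrite !zp_exppD zp_mulACA ab cd zp_mulACA.
Qed.

Lemma qp_mulACA a b c d :
  qp_mul p (qp_mul p a b) (qp_mul p c d) = qp_mul p (qp_mul p a c) (qp_mul p b d).
Proof. by rewrite /qp_mul /= zp_mulACA addnACA. Qed.

Lemma vqp_of_zp x : vqp (qp_of_zp x) = vzp x.
Proof. by rewrite /vqp /=; case: vzp => //= k; rewrite addr0. Qed.

Lemma vqp_mul a b : is_qp p a -> is_qp p b ->
  vqp (qp_mul p a b) = zinf_add (vqp a) (vqp b).
Proof.
move=> ha hb; rewrite /vqp /= vzp_mul //.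
by case: (vzp a.1) (vzp b.1) => [i|] [j|] //=; congr Fin; lia.
Qed.

Lemma vqp_eqE a b : is_qp p a -> is_qp p b ->
  vqp a = vqp b <-> vzp (zp_mul p a.1 (zp_expp b.2)) = vzp (zp_mul p b.1 (zp_expp a.2)).
Proof.
move=> ha hb; rewrite !vzp_mul ?vzp_expp // /vqp.
by case: (vzp a.1) (vzp b.1) => [i|] [j|] //=; split=> // -[] ij; congr Fin; lia.
Qed.

Lemma vqp_eq a b : is_qp p a -> is_qp p b -> qp_eq p a b -> vqp a = vqp b.
Proof. by move=> ha hb /qp_eqE ab; apply/vqp_eqE => //; rewrite ab. Qed.

Lemma vqp_int_mul (m : int) a : m != 0%R -> is_qp p a ->
  vqp (qp_mul p (qp_of_zp (zp_of_int p m)) a) = zinf_add (Fin (logn p `|m|%N)) (vqp a).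
Proof. by move=> m0 ha; rewrite vqp_mul ?vqp_of_zp ?vzp_of_int //; apply: is_zp_of_int. Qed.

Lemma qp_unit_of_eq_vqp a b : is_qp p a -> is_qp p b -> vqp a = vqp b ->
  exists u w, zp_inverses u w /\ qp_eq p a (qp_mul p b (qp_of_zp u)).
Proof.
move=> ha hb /(vqp_eqE ha hb) vAB.
set A := zp_mul p a.1 (zp_expp b.2); set B := zp_mul p b.1 (zp_expp a.2).
suff [u [w [uw BuA]]] : exists u w, zp_inverses u w /\ zp_mul p B u = A.
  exists u, w; split => //; apply/qp_eqE => /=; rewrite addn0 -/A -BuA.
  by rewrite -!zp_mulA (zp_mulC u).
have hA : is_zp p A by exact: is_zp_mul.
have hB : is_zp p B by exact: is_zp_mul.
move: vAB; case: (vzpP hA) => [A0 | V A0 A1]; case: (vzpP hB) => [B0 | V' B0 B1] //.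
  move=> _; exists (zp_one p), (zp_one p); split; first by split; rewrite ?zp_mul1.
  by apply: functional_extensionality => n; rewrite zp_mul1 // A0 B0.
case=> eV; subst V'.
by apply: (zp_unit_of_eq_vzp (V := V) hA hB); apply: vzp_fin.
Qed.

End Padic.

Lemma is_qp_adele_of_int p m : prime p -> is_qp p (adele_of_int m p).
Proof. by move=> pp; apply: is_zp_of_int. Qed.

#[local] Hint Resolve is_zp_of_int is_zp_one is_zp_mul is_zp_expp : core.
#[local] Hint Resolve is_qp_mul is_qp_adele_of_int : core.

Lemma vrat_div p (m n : int) : m != 0%R -> n != 0%R ->
  vrat p (m%:~R / n%:~R) = ((logn p `|m|%N)%:Z - (logn p `|n|%N)%:Z)%R.
Proof.
move=> m0 n0; set q : rat := (m%:~R / n%:~R)%R.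
have q0 : q != 0%R by rewrite /q mulf_neq0 ?invr_eq0 ?intr_eq0.
have cross : `|numq q|%N * `|n|%N = `|m|%N * `|denq q|%N.
  have := divq_num_den q; rewrite {2}/q => /eqP.
  rewrite eqr_div ?intr_eq0 ?denq_neq0 // -!intrM => /eqP /intr_inj e.
  by rewrite -!abszM e.
have num0 : 0 < `|numq q|%N by rewrite absz_gt0 numq_eq0.
have den0 : 0 < `|denq q|%N by rewrite absz_gt0 denq_neq0.
have mpos : 0 < `|m|%N by rewrite absz_gt0.
have npos : 0 < `|n|%N by rewrite absz_gt0.
have := congr1 (logn p) cross; rewrite !lognM // /vrat; lia.
Qed.

Lemma adele_of_intM p (m n : int) : prime p ->
  adele_of_int (m * n) p = qp_mul p (adele_of_int m p) (adele_of_int n p).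
Proof. by move=> pp; rewrite /adele_of_int /qp_mul /= (zp_of_intM pp). Qed.

Lemma zhat_unitP u :
  zhat_unit u <-> exists w, forall p, prime p -> zp_inverses p (u p) (w p).
Proof.
split=> [[hu [w [hw uw]]] | [w uw]].
  exists w => p pp; split; auto; exact: functional_extensionality (uw p pp).
split; first by move=> p pp; case: (uw p pp).
exists w; split; first by move=> p pp; case: (uw p pp).
by move=> p pp n; case: (uw p pp) => _ _ ->.
Qed.

Lemma zhat_unit_mul u1 u2 : zhat_unit u1 -> zhat_unit u2 ->
  zhat_unit (fun p => zp_mul p (u1 p) (u2 p)).
Proof.
move=> /zhat_unitP [w1 uw1] /zhat_unitP [w2 uw2]; apply/zhat_unitP.
exists (fun p => zp_mul p (w1 p) (w2 p)) => p pp.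
case: (uw1 p pp) (uw2 p pp) => hu1 hw1 e1 [hu2 hw2 e2]; split; auto.
by rewrite zp_mulACA e1 e2 (zp_mul1 pp (is_zp_one pp)).
Qed.

Lemma is_adele_mul a b : is_adele a -> is_adele b -> is_adele (adele_mul a b).
Proof.
move=> [ha [Na hNa]] [hb [Nb hNb]]; split=> [p pp | ]; first by apply: is_qp_mul; auto.
exists (maxn Na Nb) => p pp le.
have [y1 [hy1 e1]] := hNa p pp (leq_trans (leq_maxl _ _) le).
have [y2 [hy2 e2]] := hNb p pp (leq_trans (leq_maxr _ _) le).
by exists (zp_mul p y1 y2); split; [apply: is_zp_mul | exact: (qp_eq_mul pp e1 e2)].
Qed.

Lemma adele_rel_mul a a' b b' : adele_rel a a' -> adele_rel b b' ->
  adele_rel (adele_mul a b) (adele_mul a' b').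
Proof.
move=> [m1 [n1 [u1 [m10 [n10 [hu1 e1]]]]]] [m2 [n2 [u2 [m20 [n20 [hu2 e2]]]]]].
exists (m1 * m2)%R, (n1 * n2)%R, (fun p => zp_mul p (u1 p) (u2 p)).
split; first by rewrite mulf_neq0.
split; first by rewrite mulf_neq0.
split; first exact: zhat_unit_mul.
move=> p pp; have := qp_eq_mul pp (e1 p pp) (e2 p pp).
rewrite /adele_mul !adele_of_intM // qp_mulACA.
rewrite (qp_mulACA _ (qp_mul p (adele_of_int m1 p) (a p))).
by rewrite (qp_mulACA _ (adele_of_int m1 p)).
Qed.

Lemma is_divisor_Phi a : is_adele a -> is_divisor (Phi a).
Proof.
move=> [ha [N hN]]; exists N => p pp le.
have [y [hy ya]] := hN p pp le.
rewrite /Phi -(vqp_eq pp (a := qp_of_zp y) hy (ha p pp) ya) vqp_of_zp.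
by case: (vzpP hy).
Qed.

Lemma Phi_one : divisor_eq (Phi adele_one) divisor_zero.
Proof. by move=> p pp; rewrite /Phi vqp_of_zp vzp_one. Qed.

Lemma Phi_mul a b : is_adele a -> is_adele b ->
  divisor_eq (Phi (adele_mul a b)) (divisor_add (Phi a) (Phi b)).
Proof. by move=> [ha _] [hb _] p pp; apply: vqp_mul; auto. Qed.

Lemma adele_rel_lin_equiv a b : is_adele a -> is_adele b -> adele_rel a b ->
  lin_equiv (Phi a) (Phi b).
Proof.
move=> [ha _] [hb _] [m [n [u [m0 [n0 [/zhat_unitP [w uw] e]]]]]].
exists (m%:~R / n%:~R)%R; split; first by rewrite mulf_neq0 ?invr_eq0 ?intr_eq0.
move=> p pp; rewrite vrat_div // zinf_shiftE.
have [hu _ _] := uw p pp; have hap := ha p pp; have hbp := hb p pp.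
have hnb : is_qp p (qp_mul p (adele_of_int n p) (b p)) by auto.
have hmau : is_qp p (qp_mul p (qp_mul p (adele_of_int m p) (a p)) (qp_of_zp (u p))).
  by auto.
have := vqp_eq pp hnb hmau (e p pp).
by rewrite vqp_int_mul // vqp_mul ?vqp_int_mul ?vqp_of_zp ?(vzp_unit pp (uw p pp)) ?zinf_add0; auto.
Qed.

Lemma lin_equiv_adele_rel a b : is_adele a -> is_adele b ->
  lin_equiv (Phi a) (Phi b) -> adele_rel a b.
Proof.
move=> [ha _] [hb _] [q [q0 hq]].
have m0 : numq q != 0%R by rewrite numq_eq0.
have n0 : denq q != 0%R := denq_neq0 q.
have /choice [uw huw] : forall p, exists uw : zp_raw * zp_raw, prime p ->
    zp_inverses p uw.1 uw.2 /\
    qp_eq p (qp_mul p (adele_of_int (denq q) p) (b p))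
            (qp_mul p (qp_mul p (adele_of_int (numq q) p) (a p)) (qp_of_zp uw.1)).
  move=> p; case: (boolP (prime p)) => pp; last by exists (zp_one p, zp_one p).
  have hap := ha p pp; have hbp := hb p pp.
  have hnb : is_qp p (qp_mul p (adele_of_int (denq q) p) (b p)) by auto.
  have hma : is_qp p (qp_mul p (adele_of_int (numq q) p) (a p)) by auto.
  have [|u [w [uw e]]] := qp_unit_of_eq_vqp pp hnb hma; last by exists (u, w).
  by rewrite !vqp_int_mul //; apply/zinf_shiftE; apply: hq.
exists (numq q), (denq q), (fun p => (uw p).1); do 2!split=> //; split.
  by apply/zhat_unitP; exists (fun p => (uw p).2) => p pp; case: (huw p pp).
by move=> p pp; case: (huw p pp).
Qed.

Definition adele_of_divisor (D : divisor) : adele_raw := fun p =>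
  match D p with
  | Fin d => if (0 <= d)%R then qp_of_zp (zp_expp p `|d|%N) else (zp_one p, `|d|%N)
  | Inf => qp_of_zp (zp_of_int p 0)
  end.

Lemma vqp_adele_of_divisor D p : prime p -> vqp (adele_of_divisor D p) = D p.
Proof.
move=> pp; rewrite /adele_of_divisor; case: (D p) => [d|].
  case: ifP => d0; rewrite /vqp /=.
    by rewrite (vzp_expp pp) /=; congr Fin; lia.
  by rewrite (vzp_one pp) /=; congr Fin; lia.
by rewrite vqp_of_zp vzp_inf // => n; rewrite /zp_of_int mod0z.
Qed.

Lemma Phi_surjective D : is_divisor D -> exists a, is_adele a /\ lin_equiv (Phi a) D.
Proof.
move=> [N hN]; exists (adele_of_divisor D); split; first split.
- move=> p pp; rewrite /is_qp /adele_of_divisor.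
  by case: (D p) => [d|] /=; [case: ifP => _ /=; auto | auto].
- exists N => p pp le; move: (hN p pp le); rewrite /adele_of_divisor.
  case: (D p) => [d|] /= d0.
    by rewrite leNgt d0; exists (zp_expp p `|d|%N); split; auto.
  by exists (zp_of_int p 0); split; auto.
- exists 1%R; split=> // p pp; rewrite /Phi vqp_adele_of_divisor //.
  by case: (D p) => //= d; rewrite /vrat /= logn1 subrr oppr0 addr0.
Qed.

Theorem proposition2p11 :
  (* multiplication of finite adeles descends to the double quotient *)
  (forall a b, is_adele a -> is_adele b -> is_adele (adele_mul a b)) /\
  (forall a a' b b', is_adele a -> is_adele a' -> is_adele b -> is_adele b' ->
     adele_rel a a' -> adele_rel b b' ->
     adele_rel (adele_mul a b) (adele_mul a' b')) /\
  (* Phi lands in divisors and is well defined on classes *)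
  (forall a, is_adele a -> is_divisor (Phi a)) /\
  (forall a b, is_adele a -> is_adele b -> adele_rel a b ->
     lin_equiv (Phi a) (Phi b)) /\
  (* injective on classes *)
  (forall a b, is_adele a -> is_adele b -> lin_equiv (Phi a) (Phi b) ->
     adele_rel a b) /\
  (* surjective onto Pic *)
  (forall D, is_divisor D -> exists a, is_adele a /\ lin_equiv (Phi a) D) /\
  (* monoid morphism *)
  divisor_eq (Phi adele_one) divisor_zero /\
  (forall a b, is_adele a -> is_adele b ->
     divisor_eq (Phi (adele_mul a b)) (divisor_add (Phi a) (Phi b))).
Proof.
split; first exact: is_adele_mul.
split; first by move=> a a' b b' _ _ _ _; exact: adele_rel_mul.
split; first exact: is_divisor_Phi.
split; first exact: adele_rel_lin_equiv.
split; first exact: lin_equiv_adele_rel.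
split; first exact: Phi_surjective.
split; first exact: Phi_one.
exact: Phi_mul.
Qed.
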